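(* Let $S,T\subseteq\mathbb{Z}_{>0}$ be finite and $x\in T\triangleleft S$. If $T_{<x}\setminus(T\triangleleft S)$ is empty, then $(T\setminus\{x\})\triangleleft S=(T\triangleleft S)\setminus\{x\}$. Otherwise, $(T\setminus\{x\})\triangleleft S=((T\triangleleft S)\setminus\{x\})\cup\{x'\}$, where $x'=\max(T_{<x}\setminus(T\triangleleft S))$.
   Context: For a finite set $T\subseteq\mathbb{Z}_{>0}$, $T_{<x}=\{t\in T:t<x\}$. For finite $S,T\subseteq\mathbb{Z}_{>0}$, $T\triangleleft S$ is computed by going through the elements of $S$ from largest to smallest; each $s$ picks the largest element of $T$ that is less than $s$ and not yet picked (if one exists); $T\triangleleft S$ is the set of picked elements. *)

From mathcomp Require Import all_boot all_order.
From mathcomp Require Import finmap.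
Set Implicit Arguments. Unset Strict Implicit. Unset Printing Implicit Defensive.
Local Open Scope fset_scope.

Definition fset_lt (T : {fset nat}) (x : nat) : {fset nat} :=
  [fset t in T | t < x].

(* maximum of a finite set of naturals (meaningful when nonempty) *)
Definition fmax (A : {fset nat}) : nat := \max_(t <- A) t.

(* One step: element s picks the largest element of T less than s and
   not yet picked (if one exists); P is the set picked so far. *)
Definition pick_step (T : {fset nat}) (P : {fset nat}) (s : nat) : {fset nat} :=
  let C := [fset t in T | (t < s) && (t \notin P)] in
  if C == fset0 then P else fmax C |` P.

Definition tri (T S : {fset nat}) : {fset nat} :=
  foldl (pick_step T) fset0 (sort geq (enum_fset S)).

Definition pos_set (A : {fset nat}) : Prop := forall a, a \in A -> 0 < a.

(* Compare the runs of the greedy procedure on T and on T \ {x} step by step.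
   If P is the set picked so far from T, the set picked so far from T \ {x}
   is P itself while x is unpicked, and once x has been picked it is P with x
   replaced by the largest element of T below x that P leaves free, if any.
   This invariant survives every step, whatever element s is processed: if s
   takes x, then from T \ {x} it takes the largest free element below s,
   which is the replacement; if s takes the replacement d, then from T \ {x}
   it takes the next free element below d, which becomes the new replacement;
   any other choice is the same on both sides.  Hence neither the order in
   which S is scanned nor positivity plays a role. *)
From mathcomp Require Import all_boot all_order.
From mathcomp Require Import finmap.

Set Implicit Arguments.
Unset Strict Implicit.
Unset Printing Implicit Defensive.

Local Open Scope fset_scope.

Lemma bigmax_mem_seq (s : seq nat) : s != [::] -> \max_(t <- s) t \in s.
Proof.
elim: s => // a s IH _; rewrite big_cons inE.
case: s IH => [_ | b s IH]; first by rewrite big_nil maxn0 eqxx.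
by rewrite /maxn; case: ifP => _; rewrite ?eqxx ?IH ?orbT.
Qed.

Lemma fmax_mem (A : {fset nat}) : A != fset0 -> fmax A \in A.
Proof.
case/fset0Pn=> t tA; apply: bigmax_mem_seq.
by apply/eqP=> eA; rewrite -[t \in A]/(t \in enum_fset A) eA in tA.
Qed.

Lemma leq_fmax (A : {fset nat}) t : t \in A -> t <= fmax A.
Proof. by move=> tA; apply: (leq_bigmax_seq t). Qed.

Lemma fmax_eq (A : {fset nat}) m :
  m \in A -> {in A, forall t, t <= m} -> fmax A = m.
Proof.
move=> mA le_m; apply/eqP; rewrite eqn_leq leq_fmax // andbT.
by apply/bigmax_leqP_seq=> t tA _; apply: le_m.
Qed.

Definition avail (T P : {fset nat}) (s : nat) : {fset nat} :=
  [fset t in T | (t < s) && (t \notin P)].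

Definition add_max (A P : {fset nat}) : {fset nat} :=
  if A == fset0 then P else fmax A |` P.

Lemma pick_stepE (T P : {fset nat}) s :
  pick_step T P s = add_max (avail T P s) P.
Proof. by []. Qed.

Lemma add_max0 (P : {fset nat}) : add_max fset0 P = P.
Proof. by rewrite /add_max eqxx. Qed.

Lemma add_max_eq (A P : {fset nat}) m :
  m \in A -> {in A, forall t, t <= m} -> add_max A P = m |` P.
Proof.
move=> mA le_m; rewrite /add_max (fmax_eq mA le_m).
by have /negbTE -> : A != fset0 by apply/fset0Pn; exists m.
Qed.

Variant add_max_spec (A P : {fset nat}) : {fset nat} -> Prop :=
  | AddMax0 of A = fset0 : add_max_spec A P P
  | AddMaxS m of m \in A & {in A, forall t, t <= m} :
      add_max_spec A P (m |` P).

Lemma add_maxP (A P : {fset nat}) : add_max_spec A P (add_max A P).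
Proof.
have [A0 | nA0] := eqVneq A fset0; first by rewrite A0 add_max0; constructor.
rewrite /add_max (negbTE nA0); constructor; [exact: fmax_mem | exact: leq_fmax].
Qed.

Lemma availU1 (T P : {fset nat}) s c : avail T (c |` P) s = avail T P s `\ c.
Proof.
by apply/fsetP=> t; rewrite !inE negb_or; case: (t == c); rewrite ?andbF.
Qed.

Lemma availD1 (T P : {fset nat}) s x : avail (T `\ x) P s = avail T P s `\ x.
Proof. by apply/fsetP=> t; rewrite !inE -!andbA. Qed.

Lemma availD1D1 (T P : {fset nat}) s x :
  avail (T `\ x) (P `\ x) s = avail T P s `\ x.
Proof.
by apply/fsetP=> t; rewrite !inE; case: (t == x); rewrite ?andbF ?andbT.
Qed.

Lemma notin_avail (T P : {fset nat}) s x : x \in P -> x \notin avail T P s.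
Proof. by move=> xP; rewrite !inE xP !andbF. Qed.

Lemma availD1_max (T P : {fset nat}) s c :
  c \in avail T P s -> {in avail T P s, forall t, t <= c} ->
  avail T P s `\ c = avail T P c.
Proof.
rewrite !inE => /and3P [_ cs _] le_c; apply/fsetP=> t; rewrite !inE.
case tT: (t \in T); case tP: (t \in P); rewrite ?andbF //= !andbT.
case: (ltngtP t c) => [tc | ct | ->]; rewrite ?eqxx ?andbT //=.
  exact: ltn_trans tc cs.
apply/negbTE; apply: contraTN ct => ts.
by rewrite -leqNgt le_c // !inE tT ts tP.
Qed.

Lemma fsetU1D1 (c x : nat) (P : {fset nat}) :
  c != x -> c |` (P `\ x) = (c |` P) `\ x.
Proof.
move=> cx; apply/fsetP=> t; rewrite !inE.
by case: (t =P c) => [->|]; rewrite ?cx.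
Qed.

Definition refill (T : {fset nat}) (x : nat) (P : {fset nat}) : {fset nat} :=
  if x \in P then add_max (avail T P x) (P `\ x) else P.

Section RefillStep.

Variables (T : {fset nat}) (x : nat).

Lemma refill_notin (P : {fset nat}) : x \notin P -> refill T x P = P.
Proof. by rewrite /refill => /negbTE ->. Qed.

Lemma refill_in (P : {fset nat}) :
  x \in P -> refill T x P = add_max (avail T P x) (P `\ x).
Proof. by rewrite /refill => ->. Qed.

Lemma pick_step_refill_notin (P : {fset nat}) s : x \notin P ->
  pick_step (T `\ x) (refill T x P) s = refill T x (pick_step T P s).
Proof.
move=> xNP; rewrite !pick_stepE (refill_notin xNP) availD1.
case: (add_maxP (avail T P s) P) => [-> | c cA le_c].
  by rewrite fset0D add_max0 refill_notin.
have [cx | ncx] := eqVneq c x.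
  rewrite cx in cA le_c *.
  rewrite availD1_max // refill_in ?fset1U1 // availU1 fsetU1K //.
  by rewrite mem_fsetD1 // !inE ltnn !andbF.
rewrite refill_notin; last by rewrite !inE negb_or eq_sym ncx.
apply: add_max_eq => [|t /fsetD1P [_ /le_c]] //.
exact/fsetD1P.
Qed.

Lemma pick_step_refill_in (P : {fset nat}) s : x \in P ->
  pick_step (T `\ x) (refill T x P) s = refill T x (pick_step T P s).
Proof.
move=> xP; have xNA := notin_avail T s xP.
rewrite !pick_stepE (refill_in xP).
have cNx c : c \in avail T P s -> c != x.
  by apply: contraTneq => ->.
case: (add_maxP (avail T P x) (P `\ x)) => [D0 | d dD le_d].
  rewrite availD1D1 (mem_fsetD1 xNA).
  case: (add_maxP (avail T P s) P) => [-> | c cA le_c].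
    by rewrite refill_in // D0 !add_max0.
  rewrite refill_in ?fset1Ur // availU1 D0 fset0D add_max0 -fsetU1D1 ?cNx //.
  exact: add_max_eq.
rewrite availU1 availD1D1 (mem_fsetD1 xNA).
case: (add_maxP (avail T P s) P) => [-> | c cA le_c].
  by rewrite fset0D add_max0 refill_in // (add_max_eq _ dD le_d).
rewrite refill_in ?fset1Ur // availU1 -fsetU1D1 ?cNx //.
have [cd | ncd] := eqVneq c d.
  by subst d; rewrite (availD1_max cA le_c) (availD1_max dD le_d).
rewrite (@add_max_eq _ _ c) ?(@add_max_eq _ _ d).
- exact: fsetUCA.
- by apply/fsetD1P; rewrite eq_sym ncd.
- by move=> t /fsetD1P [_ /le_d].
- exact/fsetD1P.
- by move=> t /fsetD1P [_ /le_c].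
Qed.

Lemma pick_step_refill (P : {fset nat}) s :
  pick_step (T `\ x) (refill T x P) s = refill T x (pick_step T P s).
Proof.
by have [xP | xNP] := boolP (x \in P);
  [exact: pick_step_refill_in | exact: pick_step_refill_notin].
Qed.

Lemma foldl_pick_step_refill (r : seq nat) :
  foldl (pick_step (T `\ x)) fset0 r = refill T x (foldl (pick_step T) fset0 r).
Proof.
elim/last_ind: r => [|r s IH]; first by rewrite /= refill_notin.
by rewrite !foldl_rcons IH pick_step_refill.
Qed.

End RefillStep.

Lemma fset_ltD (T P : {fset nat}) x : fset_lt T x `\` P = avail T P x.
Proof. by apply/fsetP=> t; rewrite !inE [LHS]andbC -andbA. Qed.

Theorem lemma4p5 (S T : {fset nat}) (x : nat) :
  pos_set S -> pos_set T -> x \in tri T S ->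
  (fset_lt T x `\` tri T S = fset0 ->
     tri (T `\ x) S = tri T S `\ x) /\
  (fset_lt T x `\` tri T S != fset0 ->
     tri (T `\ x) S = (tri T S `\ x) `|` [fset fmax (fset_lt T x `\` tri T S)]).
Proof.
move=> _ _ xP.
rewrite /tri foldl_pick_step_refill -/(tri T S) (refill_in _ xP) -fset_ltD.
rewrite /add_max; split=> [-> | /negbTE ->]; first by rewrite eqxx.
exact: fsetUC.
Qed.
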